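(* Let $V=V_{\bar0}\oplus V_{\bar1}$ be an $\mathcal{L}$-module which is free of rank $2$ as a $\mathbb{C}[L_{0,0}]$-module, with homogeneous basis elements $1_{\bar0}\in V_{\bar0}$ and $1_{\bar1}\in V_{\bar1}$, so $V_{\bar0}=\mathbb{C}[L_{0,0}]1_{\bar0}$ and $V_{\bar1}=\mathbb{C}[L_{0,0}]1_{\bar1}$. Write $f(t)1_{\bar0}:=f(L_{0,0})1_{\bar0}$ and $g(x)1_{\bar1}:=g(L_{0,0})1_{\bar1}$ for polynomials $f,g$. Suppose $\lambda,\mu\in\mathbb{C}^*$ and $a,b,c,d\in\mathbb{C}$ are such that for all $f\in\mathbb{C}[t]$, $g\in\mathbb{C}[x]$, $m\in\mathbb{Z}$, $i\in\mathbb{Z}_+$: $L_{m,i}f(t)1_{\bar0}=\lambda^m(\delta_{i,0}(t-mqa)+\delta_{q,-1}\delta_{i,1}b)f(t-mq)1_{\bar0}$ and $L_{m,i}g(x)1_{\bar1}=\mu^m(\delta_{i,0}(x-mqc)+\delta_{q,-1}\delta_{i,1}d)g(x-mq)1_{\bar1}$. Then $\lambda=\mu$, $\delta_{q,-1}b=\delta_{q,-1}d$, and there exists $e\in\mathbb{C}^*$ such that one of the following holds: (i) $c=a+\frac12$, $G_{\frac12,0}1_{\bar0}=e1_{\bar1}$, $G_{\frac12,1}1_{\bar0}=0$, $G_{\frac12,1}1_{\bar1}=\frac{2q}{e}\lambda\delta_{q,-1}b1_{\bar0}$, $G_{\frac12,0}1_{\bar1}=\frac{q}{e}\lambda(t-qa)1_{\bar0}$;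 (ii) $c=a-\frac12$, $G_{\frac12,0}1_{\bar1}=e1_{\bar0}$, $G_{\frac12,1}1_{\bar1}=0$, $G_{\frac12,1}1_{\bar0}=\frac{2q}{e}\lambda\delta_{q,-1}b1_{\bar1}$, $G_{\frac12,0}1_{\bar0}=\frac{q}{e}\lambda(x-qa+\frac{q}{2})1_{\bar1}$.
   Context: Fix $q\in\mathbb{C}^*$; $\mathbb{Z}_+=\{0,1,2,\dots\}$; $\delta$ is the Kronecker delta. The Neveu-Schwarz-Block algebra $\mathcal{L}$ is the Lie superalgebra over $\mathbb{C}$ with even basis $\{L_{m,i}\mid m\in\mathbb{Z},i\in\mathbb{Z}_+\}$, odd basis $\{G_{l,j}\mid l\in\frac12+\mathbb{Z},j\in\mathbb{Z}_+\}$ and brackets $[L_{m,i},L_{n,j}]=(n(i+q)-m(j+q))L_{m+n,i+j}$, $[L_{m,i},G_{l,j}]=(l(i+q)-m(j+\frac{q}{2}))G_{m+l,i+j}$, $[G_{l,i},G_{r,j}]=2qL_{l+r,i+j}$. Modules are supermodules. Thus $L_{0,0}$ acts on $V_{\bar0}\cong\mathbb{C}[t]$ as multiplication by $t$ and on $V_{\bar1}\cong\mathbb{C}[x]$ as multiplication by $x$. *)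

From HB Require Import structures.
From mathcomp Require Import all_boot all_order all_algebra.
From mathcomp Require Import reals Rstruct complex.
Set Implicit Arguments. Unset Strict Implicit. Unset Printing Implicit Defensive.
Import Order.TTheory GRing.Theory Num.Theory.
Local Open Scope ring_scope.

Notation CC := (Rdefinitions.R)[i].

(* The underlying space of a rank-2 free C[L_{0,0}]-module with homogeneous
   basis 1_0, 1_1:  V = C[t] 1_0 (+) C[x] 1_1 is represented by pairs
   (f, g) of polynomials, meaning f(t) 1_0 + g(x) 1_1.  The even part is
   {(f,0)}, the odd part {(0,g)}. *)
Definition V : Type := ({poly CC} * {poly CC})%type.

Definition one0 : V := (1, 0).
Definition one1 : V := (0, 1).

Definition is_linear_op (T : V -> V) : Prop :=
  forall (k : CC) (u v : V), T (k *: u + v) = k *: T u + T v.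

Definition is_even_op (T : V -> V) : Prop :=
  (forall f : {poly CC}, (T (f, 0)).2 = 0) /\
  (forall g : {poly CC}, (T (0, g)).1 = 0).
Definition is_odd_op (T : V -> V) : Prop :=
  (forall f : {poly CC}, (T (f, 0)).1 = 0) /\
  (forall g : {poly CC}, (T (0, g)).2 = 0).

(* Lop m i   represents the action of L_{m,i}   (m : int, i : nat),
   Gop k j   represents the action of G_{k+1/2, j} (k : int, j : nat),
   so that the half-integer index l = k + 1/2 ranges over 1/2 + Z. *)
Definition NSB_module (q : CC) (Lop : int -> nat -> V -> V)
    (Gop : int -> nat -> V -> V) : Prop :=
  (forall m i, is_linear_op (Lop m i)) /\
  (forall k j, is_linear_op (Gop k j)) /\
  (forall m i, is_even_op (Lop m i)) /\
  (forall k j, is_odd_op (Gop k j)) /\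
  (forall (m n : int) (i j : nat) (v : V),
     Lop m i (Lop n j v) - Lop n j (Lop m i v)
     = (n%:~R * (i%:R + q) - m%:~R * (j%:R + q)) *: Lop (m + n) (i + j)%N v) /\
  (forall (m k : int) (i j : nat) (v : V),
     Lop m i (Gop k j v) - Gop k j (Lop m i v)
     = ((k%:~R + 2^-1) * (i%:R + q) - m%:~R * (j%:R + q / 2))
         *: Gop (m + k) (i + j)%N v) /\
  (forall (k k' : int) (i j : nat) (v : V),
     Gop k i (Gop k' j v) + Gop k' j (Gop k i v)
     = (2 * q) *: Lop (k + k' + 1) (i + j)%N v).

Definition kdelta {T : eqType} (x y : T) : CC := (x == y)%:R.

(* Since [L_{0,0}, G_{1/2,j}] = (q/2) G_{1/2,j} and L_{0,0} acts by multiplication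
   by the variable, G_{1/2,0} maps f(t) 1_0 to f(x - q/2) g(x) 1_1 and g(x) 1_1 to
   g(t - q/2) h(t) 1_0.  The relation G_{1/2,0}^2 = q L_{1,0} makes g(x - q/2) h(x)
   and h(t - q/2) g(t) of degree one, so g or h is a nonzero constant e;
   exchanging the parities of V swaps (lambda, a, b) with (mu, c, d) and reduces
   to g = e.  Comparing coefficients then gives lambda = mu and c = a + 1/2.
   [L_{0,1}, G_{1/2,0}] = (1+q)/2 G_{1/2,1} forces delta_{q,-1} (b - d) = 0 and
   G_{1/2,1} = 0 for q <> -1; for q = -1, G_{1/2,1} is computed from
   q G_{-1/2,0} = [L_{-1,0}, G_{1/2,0}] and 1/2 G_{1/2,1} = [L_{1,1}, G_{-1/2,0}]. *)

From HB Require Import structures.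
From mathcomp Require Import all_boot all_order all_algebra.
From mathcomp Require Import reals Rstruct complex.
From mathcomp Require Import ring zify.
Import Order.TTheory GRing.Theory Num.Theory.
Set Implicit Arguments.
Unset Strict Implicit.
Local Open Scope ring_scope.

Lemma intertwine_XsubCE (R : comNzRingType) (F : {poly R} -> {poly R}) (s : R) :
    (forall p r, F (p + r) = F p + F r) -> (forall k p, F (k *: p) = k *: F p) ->
    (forall p, F ('X * p) = ('X - s%:P) * F p) ->
  forall p, F p = (p \Po ('X - s%:P)) * F 1.
Proof.
move=> FD FZ FX; elim/poly_ind => [|p k IH].
  by rewrite comp_poly0 mul0r; move: (FZ 0 0); rewrite !scale0r.
have Fk : F k%:P = k%:P * F 1 by rewrite -alg_polyC FZ mulr_algl.
rewrite FD mulrC FX IH Fk comp_polyD comp_polyM comp_polyX comp_polyC; ring.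
Qed.

Lemma comp_poly1 (R : nzRingType) (p : {poly R}) : 1 \Po p = 1.
Proof. by rewrite -polyC1 comp_polyC. Qed.

Lemma eq_scale_XsubC (R : nzRingType) (A B C D : R) :
  A *: ('X - B%:P) = C *: ('X - D%:P) -> A = C /\ A * B = C * D.
Proof.
move=> E; have := congr1 (coefp 1) E; have := congr1 (coefp 0) E.
rewrite /= !coefZ !coefB !coefX !coefC /= !sub0r !subr0 !mulr1 !mulrN.
by move=> /oppr_inj.
Qed.

Lemma size_mul_eq2 (R : idomainType) (p r : {poly R}) :
  size (p * r) = 2 -> (size p <= 1)%N \/ (size r <= 1)%N.
Proof.
have [->|p0] := eqVneq p 0; first by rewrite mul0r size_poly0.
have [->|r0] := eqVneq r 0; first by rewrite mulr0 size_poly0.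
rewrite size_mul //; move: p0 r0; rewrite -!size_poly_gt0; lia.
Qed.

Lemma pairD (f g f' g' : {poly CC}) : ((f, g) + (f', g') : V) = (f + f', g + g').
Proof. by []. Qed.

Lemma pairZ (k : CC) (f g : {poly CC}) : (k *: (f, g) : V) = (k *: f, k *: g).
Proof. by []. Qed.

Lemma pairZ_even (k : CC) (f : {poly CC}) : ((k *: f, 0) : V) = k *: (f, 0).
Proof. by rewrite pairZ scaler0. Qed.

Lemma pairZ_odd (k : CC) (g : {poly CC}) : ((0, k *: g) : V) = k *: (0, g).
Proof. by rewrite pairZ scaler0. Qed.

Section LinearOperators.

Variable T : V -> V.
Hypothesis T_linear : is_linear_op T.

Lemma linear_opD u v : T (u + v) = T u + T v.
Proof. by have := T_linear 1 u v; rewrite !scale1r. Qed.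

Lemma linear_op0 : T 0 = 0.
Proof. by apply: (addrI (T 0)); rewrite -linear_opD !addr0. Qed.

Lemma linear_opZ k u : T (k *: u) = k *: T u.
Proof. by have := T_linear k u 0; rewrite !addr0 linear_op0 addr0. Qed.

End LinearOperators.

Lemma odd_op_even {T : V -> V} : is_odd_op T -> forall f, T (f, 0) = (0, (T (f, 0)).2).
Proof. by case=> T0 _ f; move: (T0 f); case: (T (f, 0)) => ? ? /= ->. Qed.

Lemma odd_op_odd {T : V -> V} : is_odd_op T -> forall g, T (0, g) = ((T (0, g)).1, 0).
Proof. by case=> _ T1 g; move: (T1 g); case: (T (0, g)) => ? ? /= ->. Qed.

Lemma odd_op_intertwineE {G : V -> V} (s : CC) : is_linear_op G ->
    (forall f, (G ('X * f, 0)).2 = ('X - s%:P) * (G (f, 0)).2) ->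
    (forall g, (G (0, 'X * g)).1 = ('X - s%:P) * (G (0, g)).1) ->
  (forall f, (G (f, 0)).2 = (f \Po ('X - s%:P)) * (G one0).2) /\
  (forall g, (G (0, g)).1 = (g \Po ('X - s%:P)) * (G one1).1).
Proof.
move=> G_lin GX0 GX1; split; apply: intertwine_XsubCE => //.
- move=> f f'; have -> : ((f + f', 0) : V) = (f, 0) + (f', 0) by rewrite pairD addr0.
  by rewrite linear_opD.
- by move=> k f; rewrite pairZ_even linear_opZ.
- move=> g g'; have -> : ((0, g + g') : V) = (0, g) + (0, g') by rewrite pairD addr0.
  by rewrite linear_opD.
- by move=> k g; rewrite pairZ_odd linear_opZ.
Qed.

Section NSBModule.

Variables (q lambda mu a b c d : CC) (Lop Gop : int -> nat -> V -> V).
Hypotheses (hq : q != 0) (hlambda : lambda != 0) (hmu : mu != 0).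
Hypothesis hmod : NSB_module q Lop Gop.
Hypothesis Lop_even : forall (f : {poly CC}) (m : int) (i : nat),
  Lop m i (f, 0) =
    (lambda ^ m *: ((kdelta i 0%N) *: ('X - (m%:~R * q * a)%:P)
                     + (kdelta q (-1) * kdelta i 1%N * b)%:P)
       * (f \Po ('X - (m%:~R * q)%:P)), 0).
Hypothesis Lop_odd : forall (g : {poly CC}) (m : int) (i : nat),
  Lop m i (0, g) =
    (0, mu ^ m *: ((kdelta i 0%N) *: ('X - (m%:~R * q * c)%:P)
                    + (kdelta q (-1) * kdelta i 1%N * d)%:P)
       * (g \Po ('X - (m%:~R * q)%:P))).

Local Notation δ := (kdelta q (-1)).

Lemma Gop_linear k j : is_linear_op (Gop k j).
Proof. by case: hmod => _ []. Qed.

Lemma Gop_odd k j : is_odd_op (Gop k j).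
Proof. by case: hmod => _ [_ [_ []]]. Qed.

Lemma Lop_Gop_bracket m k i j v :
  Lop m i (Gop k j v) - Gop k j (Lop m i v)
  = ((k%:~R + 2^-1) * (i%:R + q) - m%:~R * (j%:R + q / 2)) *: Gop (m + k) (i + j)%N v.
Proof. by case: hmod => _ [_ [_ [_ [_ []]]]]. Qed.

Lemma Gop_Gop_bracket k k' i j v :
  Gop k i (Gop k' j v) + Gop k' j (Gop k i v) = (2 * q) *: Lop (k + k' + 1) (i + j)%N v.
Proof. by case: hmod => _ [_ [_ [_ [_ []]]]]. Qed.

Lemma Lop0_even m f :
  Lop m 0 (f, 0) = (lambda ^ m *: ('X - (m%:~R * q * a)%:P) * (f \Po ('X - (m%:~R * q)%:P)), 0).
Proof. by rewrite Lop_even /kdelta /= scale1r mulr0 mul0r addr0. Qed.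

Lemma Lop0_odd m g :
  Lop m 0 (0, g) = (0, mu ^ m *: ('X - (m%:~R * q * c)%:P) * (g \Po ('X - (m%:~R * q)%:P))).
Proof. by rewrite Lop_odd /kdelta /= scale1r mulr0 mul0r addr0. Qed.

Lemma Lop1_even m f :
  Lop m 1 (f, 0) = ((lambda ^ m * (δ * b)) *: (f \Po ('X - (m%:~R * q)%:P)), 0).
Proof. by rewrite Lop_even /kdelta /= scale0r add0r mulr1 -scalerAl mul_polyC scalerA. Qed.

Lemma Lop1_odd m g :
  Lop m 1 (0, g) = (0, (mu ^ m * (δ * d)) *: (g \Po ('X - (m%:~R * q)%:P))).
Proof. by rewrite Lop_odd /kdelta /= scale0r add0r mulr1 -scalerAl mul_polyC scalerA. Qed.

Lemma Lop00_even f : Lop 0 0 (f, 0) = ('X * f, 0).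
Proof. by rewrite Lop0_even expr0z scale1r !mul0r subr0 comp_polyXr. Qed.

Lemma Lop00_odd g : Lop 0 0 (0, g) = (0, 'X * g).
Proof. by rewrite Lop0_odd expr0z scale1r !mul0r subr0 comp_polyXr. Qed.

Lemma Ghalf_XsubC :
  (forall f, (Gop 0 0 ('X * f, 0)).2 = ('X - (q / 2)%:P) * (Gop 0 0 (f, 0)).2) /\
  (forall g, (Gop 0 0 (0, 'X * g)).1 = ('X - (q / 2)%:P) * (Gop 0 0 (0, g)).1).
Proof.
have half : ((0 : int)%:~R + 2^-1) * (0%:R + q) - (0 : int)%:~R * (0%:R + q / 2) = q / 2.
  by ring.
split=> [f|g].
- have := Lop_Gop_bracket 0 0 0 0 (f, 0).
  rewrite half add0r add0n (odd_op_even (Gop_odd 0 0)) Lop00_odd Lop00_even.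
  move/(congr1 snd) => /= E.
  by rewrite mulrBl mul_polyC -E; ring.
- have := Lop_Gop_bracket 0 0 0 0 (0, g).
  rewrite half add0r add0n (odd_op_odd (Gop_odd 0 0)) Lop00_odd Lop00_even.
  move/(congr1 fst) => /= E.
  by rewrite mulrBl mul_polyC -E; ring.
Qed.

Lemma Ghalf_even f : Gop 0 0 (f, 0) = (0, (f \Po ('X - (q / 2)%:P)) * (Gop 0 0 one0).2).
Proof.
have [GX0 GX1] := Ghalf_XsubC.
by rewrite (odd_op_even (Gop_odd 0 0)) (odd_op_intertwineE (Gop_linear 0 0) GX0 GX1).1.
Qed.

Lemma Ghalf_odd g : Gop 0 0 (0, g) = ((g \Po ('X - (q / 2)%:P)) * (Gop 0 0 one1).1, 0).
Proof.
have [GX0 GX1] := Ghalf_XsubC.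
by rewrite (odd_op_odd (Gop_odd 0 0)) (odd_op_intertwineE (Gop_linear 0 0) GX0 GX1).2.
Qed.

Lemma Gop_one0 k j : Gop k j one0 = (0, (Gop k j one0).2).
Proof. exact: odd_op_even (Gop_odd k j) 1. Qed.

Lemma Gop_one1 k j : Gop k j one1 = ((Gop k j one1).1, 0).
Proof. exact: odd_op_odd (Gop_odd k j) 1. Qed.

(* Ghalf, Ghalf1 and Gmhalf refer to G_{1/2,0}, G_{1/2,1} and G_{-1/2,0}; these
   send 1_0 to gE 1_1, hE 1_1, pE 1_1 and 1_1 to gO 1_0, hO 1_0, pO 1_0. *)
Local Notation gE := (Gop 0 0 one0).2.
Local Notation gO := (Gop 0 0 one1).1.
Local Notation hE := (Gop 0 1 one0).2.
Local Notation hO := (Gop 0 1 one1).1.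
Local Notation pE := (Gop (-1) 0 one0).2.
Local Notation pO := (Gop (-1) 0 one1).1.

Lemma Ghalf_sq :
  (gE \Po ('X - (q / 2)%:P)) * gO = (q * lambda) *: ('X - (q * a)%:P) /\
  (gO \Po ('X - (q / 2)%:P)) * gE = (q * mu) *: ('X - (q * c)%:P).
Proof.
have two : (2 : CC) != 0 by rewrite pnatr_eq0.
have GG v : Gop 0 0 (Gop 0 0 v) = q *: Lop 1 0 v.
  apply: (scalerI two); rewrite scaler_nat mulr2n Gop_Gop_bracket !add0r add0n.
  by rewrite scalerA.
split.
- have := GG one0; rewrite Gop_one0 Ghalf_odd Lop0_even => /(congr1 fst) /= ->.
  by rewrite expr1z mulr1z !mul1r comp_poly1 mulr1 scalerA.
- have := GG one1; rewrite Gop_one1 Ghalf_even Lop0_odd => /(congr1 snd) /= ->.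
  by rewrite expr1z mulr1z !mul1r comp_poly1 mulr1 scalerA.
Qed.

Lemma Ghalf_L01 :
  ((1 + q) / 2) *: hE = (δ * (d - b)) *: gE /\
  ((1 + q) / 2) *: hO = (δ * (b - d)) *: gO.
Proof.
have coef : ((0 : int)%:~R + 2^-1) * (1%:R + q) - (0 : int)%:~R * (0%:R + q / 2) = (1 + q) / 2.
  by ring.
split.
- have := Lop_Gop_bracket 0 0 1 0 one0.
  rewrite coef add0r (Gop_one0 0 0) Lop1_odd Lop1_even (Ghalf_even (_ *: _)) => /(congr1 snd) /= <-.
  rewrite expr0z !mul0r subr0 comp_polyXr !comp_polyZ !comp_poly1 -!mul_polyC; ring.
- have := Lop_Gop_bracket 0 0 1 0 one1.
  rewrite coef add0r (Gop_one1 0 0) Lop1_odd Lop1_even (Ghalf_odd (_ *: _)) => /(congr1 fst) /= <-.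
  rewrite expr0z !mul0r subr0 comp_polyXr !comp_polyZ !comp_poly1 -!mul_polyC; ring.
Qed.

Lemma Gmhalf_Lm10 :
  (q * lambda * mu) *: pE = lambda *: ('X + (q * c)%:P) * (gE \Po ('X + q%:P))
                             - mu *: ('X + (q * a - q / 2)%:P) * gE /\
  (q * lambda * mu) *: pO = mu *: ('X + (q * a)%:P) * (gO \Po ('X + q%:P))
                             - lambda *: ('X + (q * c - q / 2)%:P) * gO.
Proof.
have coef : ((0 : int)%:~R + 2^-1) * (0%:R + q) - (-1 : int)%:~R * (0%:R + q / 2) = q.
  by field.
have -> : q * lambda * mu = lambda * mu * q by ring.
rewrite -!scalerA.
split.
- have := Lop_Gop_bracket (-1) 0 0 0 one0.
  rewrite coef addr0 add0n (Gop_one0 0 0) Lop0_odd Lop0_even (Ghalf_even (_ * _)).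
  move=> /(congr1 snd) /= <-.
  rewrite !exprN1 mulrN1z !mulN1r !mulNr !polyCN !opprK comp_poly1 mulr1.
  rewrite comp_polyZ comp_polyD comp_polyX comp_polyC !scalerBr -!scalerAl !scalerA.
  rewrite mulfK // [lambda * mu / lambda]mulrAC mulfV // mul1r -!mul_polyC; ring.
- have := Lop_Gop_bracket (-1) 0 0 0 one1.
  rewrite coef addr0 add0n (Gop_one1 0 0) Lop0_odd Lop0_even (Ghalf_odd (_ * _)).
  move=> /(congr1 fst) /= <-.
  rewrite !exprN1 mulrN1z !mulN1r !mulNr !polyCN !opprK comp_poly1 mulr1.
  rewrite comp_polyZ comp_polyD comp_polyX comp_polyC !scalerBr -!scalerAl !scalerA.
  rewrite mulfK // [lambda * mu / lambda]mulrAC mulfV // mul1r -!mul_polyC; ring.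
Qed.

Lemma Ghalf1_L11 :
  (- 2^-1 - q) *: hE = (mu * (δ * d)) *: (pE \Po ('X - q%:P)) - (lambda * (δ * b)) *: pE /\
  (- 2^-1 - q) *: hO = (lambda * (δ * b)) *: (pO \Po ('X - q%:P)) - (mu * (δ * d)) *: pO.
Proof.
have coef : ((-1 : int)%:~R + 2^-1) * (1%:R + q) - (1 : int)%:~R * (0%:R + q / 2) = - 2^-1 - q.
  by field.
split.
- have := Lop_Gop_bracket 1 (-1) 1 0 one0.
  rewrite coef addrN addn0 Lop1_even comp_poly1 pairZ_even (linear_opZ (Gop_linear _ _)).
  rewrite (Gop_one0 (-1) 0) Lop1_odd => /(congr1 snd) /= <-.
  by rewrite !expr1z mulr1z mul1r.
- have := Lop_Gop_bracket 1 (-1) 1 0 one1.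
  rewrite coef addrN addn0 Lop1_odd comp_poly1 pairZ_odd (linear_opZ (Gop_linear _ _)).
  rewrite (Gop_one1 (-1) 0) Lop1_even => /(congr1 fst) /= <-.
  by rewrite !expr1z mulr1z mul1r.
Qed.

Lemma gE_neq0 : gE != 0.
Proof.
apply/eqP => gE0; have := Ghalf_sq.1; rewrite gE0 comp_poly0 mul0r => /esym/eqP.
by rewrite scaler_eq0 mulf_eq0 polyXsubC_eq0 (negbTE hq) (negbTE hlambda).
Qed.

Lemma kdelta_b_d : δ * b = δ * d.
Proof.
have := Ghalf_L01.1; rewrite /kdelta; case: eqP => [->|_]; last by rewrite !mul0r.
rewrite addrN mul0r scale0r !mul1r => /esym/eqP.
by rewrite scaler_eq0 (negbTE gE_neq0) orbF subr_eq0 => /eqP.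
Qed.

Lemma Ghalf_const : (exists e, gE = e%:P) \/ (exists e, gO = e%:P).
Proof.
have : size ((gE \Po ('X - (q / 2)%:P)) * gO) = 2.
  by rewrite Ghalf_sq.1 size_scale ?mulf_neq0 // size_XsubC.
case/size_mul_eq2; rewrite ?size_comp_poly2 ?size_XsubC // => /size1_polyC gC.
  by left; exists gE`_0.
by right; exists gO`_0.
Qed.

Section EvenConstant.

Variable e : CC.
Hypothesis gE_const : gE = e%:P.

Lemma e_neq0 : e != 0.
Proof. by move: gE_neq0; rewrite gE_const polyC_eq0. Qed.

Lemma gO_linear : gO = (q / e * lambda) *: ('X - (q * a)%:P).
Proof.
have := Ghalf_sq.1; rewrite gE_const comp_polyC mul_polyC => E.
apply: (scalerI e_neq0); rewrite E scalerA; congr (_ *: _).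
by field; exact: e_neq0.
Qed.

Lemma lambda_eq_mu_c_eq : lambda = mu /\ c = a + 2^-1.
Proof.
have : (q * lambda) *: ('X - (q / 2 + q * a)%:P) = (q * mu) *: ('X - (q * c)%:P).
  rewrite -Ghalf_sq.2 gO_linear gE_const [_ * e%:P]mulrC mul_polyC comp_polyZ scalerA.
  have -> : e * (q / e * lambda) = q * lambda by field; exact: e_neq0.
  by rewrite comp_polyB comp_polyX comp_polyC polyCD opprD addrA.
case/eq_scale_XsubC => /(mulfI hq) lm; rewrite -lm => /(mulfI (mulf_neq0 hq hlambda)) E.
by split => //; apply: (mulfI hq); rewrite -E; field.
Qed.

Lemma Gmhalf_even_const : pE = (e / lambda)%:P /\ pO = (q / e) *: ('X + (q * a)%:P).
Proof.
have [lm ca] := lambda_eq_mu_c_eq.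
have [EE EO] := Gmhalf_Lm10.
have k0 : q * lambda * mu != 0 by rewrite -lm !mulf_neq0.
split; apply: (scalerI k0).
- rewrite EE gE_const comp_polyC -lm.
  transitivity ((lambda * e * (q * c - (q * a - q / 2)))%:P); first by rewrite -!mul_polyC; ring.
  by rewrite scale_polyC ca; congr _%:P; field.
- have qc : q * c - q / 2 = q * a by rewrite ca; field.
  rewrite EO gO_linear -lm qc comp_polyZ comp_polyB comp_polyX comp_polyC scalerA.
  by rewrite -!mul_polyC; ring.
Qed.

Lemma Ghalf1_even_const : hE = 0 /\ hO = (2 * q / e * lambda * δ * b)%:P.
Proof.
have [lm _] := lambda_eq_mu_c_eq.
have [pEc pOc] := Gmhalf_even_const.
have [LE LO] := Ghalf1_L11.
have [q1 | qN1] := eqVneq q (-1); last first.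
  have δ0 : δ = 0 by rewrite /kdelta (negbTE qN1).
  have k0 : (1 + q) / 2 != 0.
    by rewrite mulf_eq0 invr_eq0 pnatr_eq0 orbF addrC addr_eq0.
  have [EE EO] := Ghalf_L01; rewrite δ0 !mul0r !scale0r in EE EO.
  split; apply: (scalerI k0); rewrite ?EE ?EO ?scaler0 //.
  by rewrite δ0 mulr0 mul0r scaler0.
have k0 : - 2^-1 - q != 0.
  have -> : - 2^-1 - q = 2^-1 by rewrite q1; field.
  by rewrite invr_eq0 pnatr_eq0.
split.
- apply: (scalerI k0).
  by rewrite LE pEc comp_polyC -lm -kdelta_b_d subrr scaler0.
- apply: (scalerI k0); rewrite LO pOc -lm -kdelta_b_d.
  rewrite comp_polyZ comp_polyD comp_polyX comp_polyC scale_polyC.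
  transitivity ((lambda * (δ * b) * (q / e) * - q)%:P); first by rewrite -!mul_polyC; ring.
  by apply: f_equal; rewrite q1; field; exact: e_neq0.
Qed.

Lemma Ghalf_even_const_action :
  [/\ Gop 0 0 one0 = e *: one1, Gop 0 1 one0 = 0,
       Gop 0 1 one1 = (2 * q / e * lambda * δ * b) *: one0
     & Gop 0 0 one1 = ((q / e * lambda) *: ('X - (q * a)%:P), 0)].
Proof.
have [hE0 hOc] := Ghalf1_even_const.
split.
- by rewrite Gop_one0 gE_const -alg_polyC -pairZ_odd.
- by rewrite Gop_one0 hE0.
- by rewrite Gop_one1 hOc -alg_polyC -pairZ_even.
- by rewrite Gop_one1 gO_linear.
Qed.

End EvenConstant.

End NSBModule.

Definition swap (v : V) : V := (v.2, v.1).

Definition swap_op (T : V -> V) : V -> V := fun v => swap (T (swap v)).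

Lemma swapK : involutive swap.
Proof. by case. Qed.

Lemma swapD u v : swap (u + v) = swap u + swap v.
Proof. by case: u; case: v. Qed.

Lemma swapZ k u : swap (k *: u) = k *: swap u.
Proof. by case: u. Qed.

Lemma swapB u v : swap (u - v) = swap u - swap v.
Proof. by case: u; case: v. Qed.

Lemma swap_opE T u : T u = swap (swap_op T (swap u)).
Proof. by rewrite /swap_op !swapK. Qed.

Lemma swap_op_eq T u v : swap_op T (swap u) = swap v -> T u = v.
Proof. by move=> E; rewrite swap_opE E swapK. Qed.

Lemma swap_op_linear T : is_linear_op T -> is_linear_op (swap_op T).
Proof. by move=> T_lin k u v; rewrite /swap_op swapD swapZ T_lin swapD swapZ. Qed.

Lemma swap_op_even T : is_even_op T -> is_even_op (swap_op T).
Proof. by case=> T0 T1; split=> f; [exact: T1 | exact: T0]. Qed.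

Lemma swap_op_odd T : is_odd_op T -> is_odd_op (swap_op T).
Proof. by case=> T0 T1; split=> f; [exact: T1 | exact: T0]. Qed.

Lemma NSB_module_swap q Lop Gop : NSB_module q Lop Gop ->
  NSB_module q (fun m i => swap_op (Lop m i)) (fun k j => swap_op (Gop k j)).
Proof.
case=> L_lin [G_lin [L_even [G_odd [LL [LG GG]]]]].
split; first by move=> m i; apply/swap_op_linear/L_lin.
split; first by move=> k j; apply/swap_op_linear/G_lin.
split; first by move=> m i; apply/swap_op_even/L_even.
split; first by move=> k j; apply/swap_op_odd/G_odd.
split; first by move=> *; rewrite /swap_op !swapK -swapB LL swapZ.
split; first by move=> *; rewrite /swap_op !swapK -swapB LG swapZ.
by move=> *; rewrite /swap_op !swapK -swapD GG swapZ.
Qed.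

Theorem lemma5p1 (q : CC) (hq : q != 0)
  (Lop : int -> nat -> V -> V) (Gop : int -> nat -> V -> V)
  (hmod : NSB_module q Lop Gop)
  (lambda mu a b c d : CC) (hlambda : lambda != 0) (hmu : mu != 0)
  (hL0 : forall (f : {poly CC}) (m : int) (i : nat),
     Lop m i (f, 0) =
       (lambda ^ m *: ((kdelta i 0%N) *: ('X - (m%:~R * q * a)%:P)
                        + (kdelta q (-1) * kdelta i 1%N * b)%:P)
          * (f \Po ('X - (m%:~R * q)%:P)), 0))
  (hL1 : forall (g : {poly CC}) (m : int) (i : nat),
     Lop m i (0, g) =
       (0, mu ^ m *: ((kdelta i 0%N) *: ('X - (m%:~R * q * c)%:P)
                        + (kdelta q (-1) * kdelta i 1%N * d)%:P)
          * (g \Po ('X - (m%:~R * q)%:P)))) :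
  lambda = mu /\ kdelta q (-1) * b = kdelta q (-1) * d /\
  exists e : CC, e != 0 /\
   ((c = a + 2^-1 /\
     Gop 0 0%N one0 = e *: one1 /\
     Gop 0 1%N one0 = 0 /\
     Gop 0 1%N one1 = (2 * q / e * lambda * kdelta q (-1) * b) *: one0 /\
     Gop 0 0%N one1 = ((q / e * lambda) *: ('X - (q * a)%:P), 0))
    \/
    (c = a - 2^-1 /\
     Gop 0 0%N one1 = e *: one0 /\
     Gop 0 1%N one1 = 0 /\
     Gop 0 1%N one0 = (2 * q / e * lambda * kdelta q (-1) * b) *: one1 /\
     Gop 0 0%N one0 = (0, (q / e * lambda) *: ('X - (q * a - q / 2)%:P)))).
Proof.
have bd := kdelta_b_d hq hlambda hmod hL0 hL1.
have [[e gE_e] | [e gO_e]] := Ghalf_const hq hlambda hmod hL0 hL1.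
  have e0 := e_neq0 hq hlambda hmod hL0 hL1 gE_e.
  have [lm ca] := lambda_eq_mu_c_eq hq hlambda hmod hL0 hL1 gE_e.
  have [G00_0 G01_0 G01_1 G00_1] := Ghalf_even_const_action hq hlambda hmu hmod hL0 hL1 gE_e.
  by split=> //; split=> //; exists e; split=> //; left.
have smod := NSB_module_swap hmod.
have sL0 f m i : swap_op (Lop m i) (f, 0) = _ := congr1 swap (hL1 f m i).
have sL1 g m i : swap_op (Lop m i) (0, g) = _ := congr1 swap (hL0 g m i).
have e0 := e_neq0 hq hmu smod sL0 sL1 gO_e.
have [ml ac] := lambda_eq_mu_c_eq hq hmu smod sL0 sL1 gO_e.
have [G00_1 G01_1 G01_0 G00_0] := Ghalf_even_const_action hq hmu hlambda smod sL0 sL1 gO_e.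
split; first by rewrite ml.
split=> //; exists e; split=> //; right.
split; first by rewrite ac addrK.
split; first by apply: swap_op_eq; exact: G00_1.
split; first by apply: swap_op_eq; exact: G01_1.
split; apply: swap_op_eq.
  by rewrite G01_0 swapZ ml -!mulrA bd.
by rewrite G00_0 ml ac mulrDr addrK.
Qed.
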